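(* Let $d\in\mathbb{N}$. The set $\Pi\subset\mathbb{R}^d\times\mathbb{R}^d$ is Lebesgue measurable and has Lebesgue measure $0$. Moreover, for every $x\in\mathbb{R}^d$, the set $\Phi(x)\subset\mathbb{R}^d$ has Lebesgue measure $0$.
   Context: For $z\in\mathbb{R}^d$, $\|z\|$ denotes the sup-norm distance from $z$ to $\mathbb{Z}^d$. Write $\mathbb{N}=\{1,2,3,\dots\}$. For $\psi:\mathbb{N}\to\mathbb{R}_{\ge 0}$, let $W(\psi)$ be the set of pairs $(x,y)\in\mathbb{R}^d\times\mathbb{R}^d$ for which $\|nx+y\|<\psi(n)$ holds for infinitely many $n\in\mathbb{N}$. $\mathcal{D}$ is the set of all non-increasing $\psi:\mathbb{N}\to\mathbb{R}_{\ge0}$ with $\sum_n\psi(n)^d=\infty$. $\Pi=\bigcap_{\psi\in\mathcal{D}}W(\psi)$, and $\Phi(x)=\{y\in\mathbb{R}^d:(x,y)\in\Pi\}$. *)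

From HB Require Import structures.
From mathcomp Require Import all_boot all_order all_algebra.
From mathcomp Require Import all_classical all_reals all_analysis.
Set Implicit Arguments.
Unset Strict Implicit.
Unset Printing Implicit Defensive.
Import Order.TTheory GRing.Theory Num.Theory.
Local Open Scope classical_set_scope.
Local Open Scope ring_scope.

Section Defs.
Variable R : realType.

Definition box (n : nat) (a b : 'rV[R]_n) : set 'rV[R]_n :=
  [set z | forall i : 'I_n, a ord0 i <= z ord0 i <= b ord0 i].

Definition box_vol (n : nat) (a b : 'rV[R]_n) : R :=
  \prod_(i < n) Num.max 0 (b ord0 i - a ord0 i).

Definition lebesgue_outer (n : nat) (A : set 'rV[R]_n) : \bar R :=
  ereal_inf [set s | exists a b : nat -> 'rV[R]_n,
    A `<=` \bigcup_k box (a k) (b k) /\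
    s = (\sum_(k <oo) (box_vol (a k) (b k))%:E)%E].

Definition lebesgue_measurable (n : nat) (A : set 'rV[R]_n) : Prop :=
  caratheodory_measurable (@lebesgue_outer n) A.

(** Identification of R^d x R^d with R^(d+d). *)
Definition pair_set (d : nat) (P : set ('rV[R]_d * 'rV[R]_d)) : set 'rV[R]_(d + d) :=
  [set z | P (lsubmx z, rsubmx z)].

(** ||z|| : sup-norm distance from z to Z^d. *)
Definition distZ (d : nat) (z : 'rV[R]_d) : R :=
  inf [set \big[Num.max/0]_(i < d) `|z ord0 i - (k i)%:~R|
       | k in [set: 'I_d -> int]].

(** W(psi); psi is only used at n >= 1 (N = {1,2,...}). *)
Definition W (d : nat) (psi : nat -> R) : set ('rV[R]_d * 'rV[R]_d) :=
  [set xy | forall N : nat, exists n : nat,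
     (N <= n)%N /\ (0 < n)%N /\ distZ (n%:R *: xy.1 + xy.2) < psi n].

Definition inD (d : nat) (psi : nat -> R) : Prop :=
  (forall n : nat, (0 < n)%N -> 0 <= psi n) /\
  (forall m n : nat, (0 < m)%N -> (m <= n)%N -> psi n <= psi m) /\
  (forall M : R, exists N : nat, M < \sum_(1 <= n < N) psi n ^+ d).

Definition Pi (d : nat) : set ('rV[R]_d * 'rV[R]_d) :=
  [set xy | forall psi : nat -> R, inD d psi -> @W d psi xy].

Definition Phi (d : nat) (x : 'rV[R]_d) : set 'rV[R]_d :=
  [set y | @Pi d (x, y)].

End Defs.

(* For a pair (x, y) let u n = ||n x + y|| and let psi be the running minimum
   of u.  Since psi <= u, the pair never lies in W psi; as psi is non-increasing
   and non-negative, a pair in Pi must have sum_n psi(n)^d < oo.  Summability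
   makes each late dyadic block j^d < n <= (2j)^d contribute less than th^d, so
   for every th > 0 and all large j some k <= (2j)^d has ||k x + y|| < th / j.
   Within a cube, the pairs (x, y) (or the points y, for a fixed x) with this
   property for a given j are covered by boxes of total volume O(th), uniformly
   in j: put x on a grid so fine that k x moves by at most th / j within a cell;
   then y lies within 2 th / j of one of O(1) points m - k x with m integral.
   Continuity from below of the Caratheodory measure bounds the outer measure of
   a set lying eventually in such unions of boxes by O(th), so it is null, and
   null sets are measurable. *)

From HB Require Import structures.
From mathcomp Require Import all_boot all_order all_algebra.
From mathcomp Require Import all_classical all_reals all_analysis.
From mathcomp Require Import ring lra zify.
Set Implicit Arguments.
Unset Strict Implicit.
Unset Printing Implicit Defensive.
Import Order.TTheory GRing.Theory Num.Theory.
Import numFieldNormedType.Exports.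
Local Open Scope classical_set_scope.
Local Open Scope ring_scope.

Section OuterMeasureFacts.
Local Open Scope ereal_scope.
Variables (R : realType) (T : pointedType) (mu : {outer_measure set T -> \bar R}).

Lemma esum_nat2 (h : nat * nat -> \bar R) : (forall p, 0 <= h p) ->
  \esum_(p in [set: nat * nat]) h p = \sum_(i <oo) \sum_(j <oo) h (i, j).
Proof.
move=> h0; transitivity (\esum_(i in [set: nat]) \esum_(j in [set: nat]) h (i, j)).
  rewrite esum_esum //; congr esum; first by rewrite predeqE => -[].
  by apply/funext => -[].
rewrite nneseries_esumT => [|i]; last exact: nneseries_ge0.
by apply: eq_esum => i _; rewrite nneseries_esumT.
Qed.

Lemma caratheodory_null (A : set T) : mu A = 0 -> mu.-caratheodory A.
Proof.
move=> A0; apply: le_caratheodory_measurable => X.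
have -> : mu (X `&` A) = 0.
  by apply/eqP; rewrite eq_le outer_measure_ge0 andbT -A0 le_outer_measure.
by rewrite add0e le_outer_measure //; exact: subIsetl.
Qed.

Lemma outer_measure_bigsetU_le (I : Type) (s : seq I) (F : I -> set T) :
  mu (\big[setU/set0]_(i <- s) F i) <= \sum_(i <- s) mu (F i).
Proof.
elim: s => [|i s IHs]; first by rewrite !big_nil outer_measure0.
by rewrite !big_cons (le_trans (outer_measureU2 _ _ _)) // leeD2l.
Qed.

Lemma outer_measure_liminf_le (F : nat -> set T) (e : \bar R) :
  (forall j, mu.-caratheodory (F j)) -> (forall j, mu (F j) <= e) ->
  mu (\bigcup_J \bigcap_(j in [set j | (J <= j)%N]) F j) <= e.
Proof.
move=> mF Fe; pose A J := \bigcap_(j in [set j | (J <= j)%N]) F j.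
have mA J : mu.-cara.-measurable (A J).
  by apply: (@bigcap_measurableType _ (caratheodory_type mu)) => j _; exact: mF.
have ndA : nondecreasing_seq A.
  by move=> p q pq; apply/subsetPset => z Az j /= qj; apply: Az; exact: leq_trans qj.
have cvgA := @nondecreasing_cvg_mu _ _ R (mu : set (caratheodory_type mu) -> _) A
  mA (bigcupT_measurable _ mA) ndA.
rewrite -(cvg_lim _ cvgA) //; apply: lime_le; first by apply/cvg_ex; eexists; exact: cvgA.
by near=> J; apply: le_trans (Fe J); apply: le_outer_measure => z /(_ J (leqnn J)).
Unshelve. all: by end_near. Qed.

End OuterMeasureFacts.

Definition cube (R : realType) (n K : nat) : set 'rV[R]_n :=
  [set z | forall i, `|z ord0 i| <= K%:R].

Section LebesgueOuter.
Variables (R : realType) (m : nat).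
Local Notation V := 'rV[R]_m.+1.
Local Notation lo := (@lebesgue_outer R m.+1).

Lemma box_vol_ge0 (a b : V) : 0 <= box_vol a b.
Proof. by apply: prodr_ge0 => i _; rewrite le_max lexx. Qed.

Lemma box_vol_id (a : V) : box_vol a a = 0.
Proof. by rewrite /box_vol (bigD1 ord0) //= subrr maxxx mul0r. Qed.

Local Open Scope ereal_scope.

Lemma lebesgue_outer_ge0 (A : set V) : 0 <= lo A.
Proof.
apply: le_ereal_inf_tmp => _ [a [b [_ ->]]].
by apply: nneseries_ge0 => k _ _; rewrite lee_fin box_vol_ge0.
Qed.

Lemma lebesgue_outer_le_cover (A : set V) (a b : nat -> V) :
  A `<=` \bigcup_k box (a k) (b k) ->
  lo A <= \sum_(k <oo) (box_vol (a k) (b k))%:E.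
Proof. by move=> AB; apply: ereal_inf_lbound; exists a, b. Qed.

Lemma lebesgue_outer0 : lo set0 = 0.
Proof.
apply/eqP; rewrite eq_le lebesgue_outer_ge0 andbT.
rewrite (le_trans (@lebesgue_outer_le_cover _ (fun=> 0%R) (fun=> 0%R) _)) //.
by rewrite eseries0 // => k _ _; rewrite box_vol_id.
Qed.

Lemma le_lebesgue_outer (A B : set V) : A `<=` B -> lo A <= lo B.
Proof.
move=> AB; apply: le_ereal_inf_tmp => _ [a [b [Bc ->]]].
by apply: ereal_inf_lbound; exists a, b; split => //; exact: subset_trans Bc.
Qed.

Lemma lebesgue_outer_box_le (a b : V) : lo (box a b) <= (box_vol a b)%:E.
Proof.
pose b' k := if k is 0 then b else a.
rewrite (le_trans (@lebesgue_outer_le_cover _ (fun=> a) b' _)) //.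
  by move=> z abz; exists 0%N.
rewrite (nneseries_split 0 1) => [|k _]; last by rewrite lee_fin box_vol_ge0.
by rewrite big_nat1 eseries0 ?adde0 // => -[|k] //= _ _; rewrite box_vol_id.
Qed.

Lemma lebesgue_outer_approx (A : set V) (e : R) : lo A < +oo -> (0 < e)%R ->
  exists a b : nat -> V, A `<=` \bigcup_k box (a k) (b k) /\
    \sum_(k <oo) (box_vol (a k) (b k))%:E <= lo A + e%:E.
Proof.
move=> Aoo e0; have Afin : lo A \is a fin_num.
  by rewrite ge0_fin_numE // lebesgue_outer_ge0.
have [_ [a [b [Acov ->]]] /ltW small] := lb_ereal_inf_adherent e0 Afin.
by exists a, b.
Qed.

Lemma lebesgue_outer_le_double_cover (A : set V) (a b : nat -> nat -> V) :
  A `<=` \bigcup_i \bigcup_j box (a i j) (b i j) ->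
  lo A <= \sum_(i <oo) \sum_(j <oo) (box_vol (a i j) (b i j))%:E.
Proof.
move=> Acov; pose h (p : nat * nat) := (box_vol (a p.1 p.2) (b p.1 p.2))%:E.
have h0 p : 0 <= h p by rewrite lee_fin box_vol_ge0.
rewrite (_ : \sum_(i <oo) _ = \esum_(p in [set: nat * nat]) h p); last by rewrite esum_nat2.
have /card_esym/ppcard_eqP[f] := card_nat2.
apply: le_trans (@lebesgue_outer_le_cover _ (fun k => a (f k).1 (f k).2)
                                          (fun k => b (f k).1 (f k).2) _) _.
  move=> z /Acov [i _ [j _ zij]]; exists (f^-1%FUN (i, j)) => //=.
  by rewrite invK ?inE.
by rewrite -(esum_pred_image h _ xpredT) ?[fun=> _]set_true ?image_eq.
Qed.

Lemma lebesgue_outer_sigma_subadditive : sigma_subadditive lo.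
Proof.
move=> A; have [[i ioo]|] := pselect (exists i, lo (A i) = +oo).
  rewrite (eseries_pinfty _ _ ioo) ?leey// => k _.
  by rewrite -ltNye (lt_le_trans _ (lebesgue_outer_ge0 _)).
rewrite -forallNE => Afin; apply/lee_addgt0Pr => e e0.
have /choice [ab ab_cov] k : exists ab : (nat -> V) * (nat -> V),
    A k `<=` \bigcup_j box (ab.1 j) (ab.2 j) /\
    \sum_(j <oo) (box_vol (ab.1 j) (ab.2 j))%:E <= lo (A k) + (e / (2 ^ k.+1)%:R)%:E.
  have [||a [b ?]] := @lebesgue_outer_approx (A k) (e / (2 ^ k.+1)%:R).
  - by rewrite ltey; exact/eqP/Afin.
  - by rewrite divr_gt0.
  by exists (a, b).
apply: le_trans (epsilon_trick _ _ _); last 2 first.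
- by move=> k; exact: lebesgue_outer_ge0.
- exact: ltW.
apply: le_trans (@lebesgue_outer_le_double_cover _ (fun i => (ab i).1) (fun i => (ab i).2) _) _.
  by move=> z [i _ /(ab_cov i).1 [j _ zj]]; exists i => //; exists j.
apply: lee_nneseries => [i _ _|i _]; last exact: (ab_cov i).2.
by apply: nneseries_ge0 => *; rewrite lee_fin box_vol_ge0.
Qed.

HB.instance Definition _ := isOuterMeasure.Build R V lo
  lebesgue_outer0 lebesgue_outer_ge0 le_lebesgue_outer lebesgue_outer_sigma_subadditive.

Local Close Scope ereal_scope.

Lemma max0_subr_split (a b c : R) :
  Num.max 0 (Num.min b c - a) + Num.max 0 (b - Num.max a c) = Num.max 0 (b - a).
Proof.
rewrite /Num.min /Num.max /Order.min /Order.max.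
by repeat case: ifP; rewrite ?subr_lt0 ?subr_gt0 => *; lra.
Qed.

Definition set_coord (v : V) (i : 'I_m.+1) (r : R) : V :=
  \row_j (if j == i then r else v ord0 j).

Lemma box_vol_split (a b : V) (i : 'I_m.+1) (c : R) :
  box_vol a (set_coord b i (Num.min (b ord0 i) c)) +
  box_vol (set_coord a i (Num.max (a ord0 i) c)) b = box_vol a b.
Proof.
rewrite /box_vol [RHS](bigD1 i) //= (bigD1 i) //= [X in _ + X](bigD1 i) //=.
rewrite !mxE !eqxx -(max0_subr_split (a ord0 i) (b ord0 i) c) mulrDl.
by congr (_ * _ + _ * _); apply: eq_bigr => j /negbTE ji; rewrite !mxE ji.
Qed.

Local Open Scope ereal_scope.

Lemma caratheodory_halfspace (i : 'I_m.+1) (c : R) (H : set V) :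
  [set z : V | (z ord0 i < c)%R] `<=` H -> H `<=` [set z : V | (z ord0 i <= c)%R] ->
  lo.-caratheodory H.
Proof.
move=> ltH Hle; apply: le_caratheodory_measurable => X.
change (lo (X `&` H) + lo (X `&` ~` H) <= lo X).
rewrite [leRHS]/lebesgue_outer; apply: le_ereal_inf_tmp => _ [a [b [Xcov ->]]].
(* Cutting every box of the cover along the hyperplane [z_i = c] covers both
   [X `&` H] and [X `&` ~` H] at the same total volume. *)
pose b' k := set_coord (b k) i (Num.min (b k ord0 i) c).
pose a' k := set_coord (a k) i (Num.max (a k ord0 i) c).
apply: le_trans (leeD (@lebesgue_outer_le_cover _ a b' _)
                      (@lebesgue_outer_le_cover _ a' b _)) _.
- move=> z [/Xcov [k _ zk] /Hle zc]; exists k => // j.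
  rewrite /b' !mxE; case: eqP => [->|_]; last exact: zk.
  by have /andP[-> zb] := zk i; rewrite le_min zb zc.
- move=> z [/Xcov [k _ zk] zNH]; exists k => // j.
  rewrite /a' !mxE; case: eqP => [->|_]; last exact: zk.
  have cz : (c <= z ord0 i)%R by rewrite leNgt; apply/negP => /ltH.
  by have /andP[az ->] := zk i; rewrite ge_max az cz.
- have vol0 k (a1 b1 : nat -> V) : 0 <= (box_vol (a1 k) (b1 k))%:E.
    by rewrite lee_fin box_vol_ge0.
  rewrite -nneseriesD => [|k _ _|k _ _]; [|exact: vol0|exact: vol0].
  apply: lee_nneseries => [k _ _|k _]; first by rewrite adde_ge0.
  by rewrite -EFinD box_vol_split.
Qed.

Lemma box_caratheodory (a b : V) : lo.-caratheodory (box a b).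
Proof.
pose slab i := [set z : V | (a ord0 i <= z ord0 i)%R] `&` [set z : V | (z ord0 i <= b ord0 i)%R].
have -> : box a b = \bigcap_(i in [set: 'I_m.+1]) slab i.
  by apply/seteqP; split => z zab i; [move=> _; apply/andP|have /andP[] := zab i I].
change (lo.-cara.-measurable (\bigcap_(i in [set: 'I_m.+1]) slab i)).
apply: fin_bigcap_measurable => [|i _]; first exact: finite_finset.
apply: caratheodory_measurable_setI.
  have -> : [set z : V | (a ord0 i <= z ord0 i)%R] = ~` [set z : V | (z ord0 i < a ord0 i)%R].
    by rewrite predeqE => z /=; rewrite ltNge; split => [->|/negP/negbNE].
  apply: caratheodory_measurable_setC.
  by apply: (@caratheodory_halfspace i (a ord0 i)) => // z /ltW.
by apply: (@caratheodory_halfspace i (b ord0 i)) => // z /ltW.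
Qed.

Lemma lebesgue_outer_fin_box_cover (T : finType) (a b : T -> V) :
  exists F : set V, [/\ lo.-caratheodory F,
    lo F <= (\sum_p box_vol (a p) (b p))%:E & forall p, box (a p) (b p) `<=` F].
Proof.
exists (\big[setU/set0]_(p <- index_enum T) box (a p) (b p)); split.
- change (lo.-cara.-measurable (\big[setU/set0]_(p <- index_enum T) box (a p) (b p))).
  by apply: bigsetU_measurable => p _; exact: box_caratheodory.
- apply: le_trans (outer_measure_bigsetU_le _ _ _) _.
  by rewrite -sumEFin; apply: lee_sum => p _; exact: lebesgue_outer_box_le.
- by move=> p z zp; rewrite -bigcup_seq; exists p => //=; exact: mem_index_enum.
Qed.

Lemma lebesgue_outer_eventually_covered_null (S : set V) (E : R -> nat -> set V) (C : R) :
  (0 <= C)%R ->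
  (forall th, (0 < th <= 1)%R -> forall z, S z ->
     exists J, forall j, (J <= j)%N -> E th j z) ->
  (forall th j, (0 < th <= 1)%R -> (0 < j)%N ->
     exists (T : finType) (a b : T -> V),
       (\sum_p box_vol (a p) (b p) <= C * th)%R /\
       forall z, E th j z -> exists p, box (a p) (b p) z) ->
  lo S = 0.
Proof.
move=> C0 SE Ecov; apply/eqP; rewrite eq_le lebesgue_outer_ge0 andbT.
apply/lee_addgt0Pr => e e0; rewrite add0e.
pose th := (Num.min 1 (e / (C + 1)))%R.
have th01 : (0 < th <= 1)%R.
  by rewrite ge_min lexx lt_min ltr01 divr_gt0 // ltr_wpDl.
have Cth : (C * th <= e)%R.
  rewrite (@le_trans _ _ (C * (e / (C + 1)))%R) ?ler_wpM2l ?ge_min ?lexx ?orbT //.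
  by rewrite mulrCA ger_pMr // ler_pdivrMr ?mul1r ?lerDl // ltr_wpDl.
have /choice [F /all_and3[mF Fe SF]] j : exists F : set V,
    [/\ lo.-caratheodory F, lo F <= e%:E & E th j.+1 `<=` F].
  have [T [a [b [vol cov]]]] := Ecov th j.+1 th01 isT.
  have [F [mF Fvol coverF]] := lebesgue_outer_fin_box_cover a b.
  exists F; split => // [|z /cov [p /coverF //]].
  by apply: le_trans Fvol _; rewrite lee_fin (le_trans vol).
apply: le_trans (outer_measure_liminf_le mF Fe).
apply: le_lebesgue_outer => z /(SE th th01) [J EJ]; exists J => // j /= Jj.
by apply: SF; apply: EJ; exact: leq_trans Jj (leqnSn j).
Qed.

Lemma lebesgue_outer_null_cubes (A : set V) :
  (forall K, lo (A `&` cube K) = 0) -> lo A = 0.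
Proof.
move=> AK0; apply/eqP; rewrite eq_le lebesgue_outer_ge0 andbT.
apply: (@le_trans _ _ (lo (\bigcup_K (A `&` cube K)))).
  apply: le_lebesgue_outer => z Az; exists (Num.bound (\sum_i `|z ord0 i|)) => //.
  split => // i; apply: ltW; apply: le_lt_trans (archi_boundP (sumr_ge0 _ _)) => //.
  by rewrite (bigD1 i) //= lerDl sumr_ge0.
apply: le_trans (lebesgue_outer_sigma_subadditive _) _.
by rewrite eseries0 // => K _ _; rewrite AK0.
Qed.

End LebesgueOuter.

Section DistZ.
Variables (R : realType) (d : nat).

Lemma distZ_ge0 (z : 'rV[R]_d) : 0 <= distZ z.
Proof.
apply: lb_le_inf; first by exists (\big[Num.max/0]_(i < d) `|z ord0 i - 0%:~R|), (fun=> 0).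
by move=> _ [k _ <-]; elim/big_ind: _ => // a b a0 b0; rewrite le_max a0.
Qed.

Lemma distZ_lt (z : 'rV[R]_d) (r : R) : distZ z < r ->
  exists k : 'I_d -> int, forall i, `|z ord0 i - (k i)%:~R| < r.
Proof.
case/inf_lt; first by exists (\big[Num.max/0]_(i < d) `|z ord0 i - 0%:~R|), (fun=> 0).
by move=> _ [k _ <-] /bigmax_ltP [_ kr]; exists k => i; exact: kr.
Qed.

End DistZ.

Section RunningMin.
Variables (R : realDomainType) (u : nat -> R).

Fixpoint running_min (k : nat) : R :=
  if k is k'.+1 then Num.min (running_min k') (u k) else u 1%N.

Lemma running_min_le k : (0 < k)%N -> running_min k <= u k.
Proof. by case: k => // k _; rewrite /= ge_min lexx orbT. Qed.

Lemma running_min_ge0 k : (forall i, 0 <= u i) -> 0 <= running_min k.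
Proof. by move=> u0; elim: k => [|k IHk] //=; rewrite le_min IHk u0. Qed.

Lemma running_min_nonincreasing p q : (p <= q)%N -> running_min q <= running_min p.
Proof.
elim: q => [|q IHq]; first by rewrite leqn0 => /eqP ->.
rewrite leq_eqVlt => /orP[/eqP -> //|]; rewrite ltnS => /IHq.
by apply: le_trans; rewrite /= ge_min lexx.
Qed.

Lemma running_min_lt k c : (0 < k)%N -> running_min k < c ->
  exists2 i, (0 < i <= k)%N & u i < c.
Proof.
elim: k => // k IHk _; rewrite /= gt_min => /orP[|ukc]; last by exists k.+1; rewrite ?leqnn.
case: k IHk => [_ u1c|k IHk /(IHk isT) [i /andP[i0 ik] uic]]; first by exists 1%N.
by exists i => //; rewrite i0 (leq_trans ik).
Qed.

End RunningMin.

Section DyadicBlocks.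
Variables (R : archiFieldType) (d : nat) (f : nat -> R).
Hypotheses (d_gt0 : (0 < d)%N) (f_ge0 : forall k, 0 <= f k).

Lemma dyadic_block_sum_ge (th : R) (j : nat) : 0 <= th -> (0 < j)%N ->
  (forall k, (j ^ d < k <= (2 * j) ^ d)%N -> th / j%:R <= f k) ->
  th ^+ d <= \sum_((j ^ d).+1 <= k < ((2 * j) ^ d).+1) f k ^+ d.
Proof.
move=> th0 j0 f_big; have thj0 : 0 <= th / j%:R by rewrite divr_ge0.
have block_len : (j ^ d <= ((2 * j) ^ d).+1 - (j ^ d).+1)%N.
  rewrite subSS expnMn; have : (2 <= 2 ^ d)%N by rewrite -{1}(expn1 2) leq_pexp2l.
  by move: (j ^ d)%N (2 ^ d)%N => X Y; nia.
apply: (@le_trans _ _ ((((2 * j) ^ d).+1 - (j ^ d).+1)%:R * (th / j%:R) ^+ d)).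
  have -> : th ^+ d = (j ^ d)%:R * (th / j%:R) ^+ d.
    by rewrite natrX -exprMn mulrCA divff ?mulr1 // pnatr_eq0 -lt0n.
  by rewrite ler_wpM2r ?exprn_ge0 // ler_nat.
rewrite mulr_natl -sumr_const_nat; apply: ler_sum_nat => k /andP[jk k2j].
by rewrite lerXn2r ?nnegrE // f_big // jk -ltnS.
Qed.

Let S N := \sum_(1 <= k < N) f k ^+ d.

Let S_mono p q : (p <= q)%N -> S p <= S q.
Proof.
have pow_ge0 k : 0 <= f k ^+ d by rewrite exprn_ge0.
move=> pq; case: (leqP p 1) => p1; first by rewrite /S big_geq ?sumr_ge0.
by rewrite /S [leRHS](big_cat_nat (n := p)) ?(ltnW p1) //= lerDl sumr_ge0.
Qed.

Lemma sum_pow_unbounded (th : R) : 0 <= th ->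
  (forall J, exists2 j, (J < j)%N &
     forall k, (0 < k <= (2 * j) ^ d)%N -> th / j%:R <= f k) ->
  forall t : nat, exists N, t%:R * th ^+ d <= S N.
Proof.
move=> th0 bad; elim=> [|t [N tN]]; first by exists 0%N; rewrite mul0r /S big_geq.
have [j Nj j_bad] := bad N; have j0 : (0 < j)%N by exact: leq_ltn_trans Nj.
have jdj : (j <= j ^ d)%N by rewrite -{1}(expn1 j) leq_pexp2l.
exists ((2 * j) ^ d).+1; rewrite -natr1 mulrDl mul1r /S.
rewrite (big_cat_nat (n := (j ^ d).+1)) //=; last by rewrite ltnS leq_exp2r // leq_pmull.
apply: lerD; last apply: dyadic_block_sum_ge => // k /andP[jk k2j].
  apply: le_trans tN (S_mono _).
  exact: leq_trans (ltnW Nj) (leq_trans jdj (leqnSn _)).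
by apply: j_bad; rewrite k2j (leq_ltn_trans (leq0n _) jk).
Qed.

Lemma bounded_sum_pow_dyadic_small (th : R) : 0 < th ->
  (exists M, forall N, S N <= M) ->
  exists J, forall j, (J <= j)%N ->
    exists2 k, (0 < k <= (2 * j) ^ d)%N & f k < th / j%:R.
Proof.
move=> th0 [M SM]; apply: contrapT => /forallNP noJ.
have /sum_pow_unbounded unbounded : forall J, exists2 j, (J < j)%N &
    forall k, (0 < k <= (2 * j) ^ d)%N -> th / j%:R <= f k.
  move=> J; have /existsNP [j /not_implyP [Jj nok]] := noJ J.+1.
  exists j => // k kj; rewrite leNgt; apply/negP => fk; apply: nok; exists k => //.
have thd0 : 0 < th ^+ d by rewrite exprn_gt0.
have [N] := unbounded (ltW th0) (Num.bound (`|M| / th ^+ d)).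
apply/negP; rewrite -ltNge; apply: le_lt_trans (SM N) _; rewrite -ltr_pdivrMr //.
apply: le_lt_trans (archi_boundP _); last by rewrite divr_ge0 // ltW.
by rewrite ler_pM2r ?invr_gt0 // ler_norm.
Qed.

End DyadicBlocks.

Section PiApproximation.
Variables (R : realType) (d : nat) (x y : 'rV[R]_d).

Lemma notin_W_minorant (psi : nat -> R) :
  (forall n, (0 < n)%N -> psi n <= distZ (n%:R *: x + y)) -> ~ W psi (x, y).
Proof. by move=> psi_le /(_ 0%N) [n [_ [n0]]]; rewrite ltNge psi_le. Qed.

Let u k := distZ (k%:R *: x + y).

Lemma Pi_running_min_sum_bounded : Pi (x, y) ->
  exists M, forall N, \sum_(1 <= n < N) running_min u n ^+ d <= M.
Proof.
move=> Pxy; apply: contrapT => /forallNP unbounded.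
apply: (@notin_W_minorant (running_min u)) => [n n0|]; first exact: running_min_le.
apply: Pxy; split; [|split].
- by move=> n _; apply: running_min_ge0 => k; exact: distZ_ge0.
- by move=> p q _; exact: running_min_nonincreasing.
- by move=> M; have /existsNP [N /negP] := unbounded M; rewrite -ltNge; exists N.
Qed.

Lemma Pi_eventually_close (th : R) : (0 < d)%N -> 0 < th -> Pi (x, y) ->
  exists J, forall j, (J <= j)%N ->
    exists k, (1 <= k <= (2 * j) ^ d)%N /\ distZ (k%:R *: x + y) < th / j%:R.
Proof.
move=> d0 th0 /Pi_running_min_sum_bounded bounded.
have u0 k : 0 <= running_min u k by apply: running_min_ge0 => i; exact: distZ_ge0.
have [J close] := bounded_sum_pow_dyadic_small d0 u0 th0 bounded.
exists J => j /close [k /andP[k0 k2j] /(running_min_lt k0) [i /andP[i0 ik] ui]].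
by exists i; rewrite i0 (leq_trans ik).
Qed.

End PiApproximation.

Section GridCells.
Variable R : realType.

Definition grid_point (K H g : nat) : R := (g%:Z - (K * H)%:Z)%:~R / H%:R.

Definition shifted_point (K : nat) (w : R) (t : nat) : R :=
  (Num.floor w + t%:Z - K%:Z)%:~R - w.

Lemma mem_grid_cell (K H : nat) (v : R) : (0 < H)%N -> `|v| <= K%:R ->
  exists g : 'I_(2 * K * H + 1), grid_point K H g <= v <= grid_point K H g + H%:R^-1.
Proof.
move=> H0; rewrite ler_norml => /andP[Kv vK].
have H0' : (0 : R) < H%:R by rewrite ltr0n.
set f := Num.floor (v * H%:R).
have /andP[fv vf] := floor_itv (v * H%:R); rewrite -/f in fv vf.
have f_le : (f%:~R : R) <= (K * H)%:Z%:~R.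
  by apply: le_trans fv _; rewrite -[_%:~R]/((K * H)%:R : R) natrM ler_pM2r.
have f_gt : (- (K * H)%:Z)%:~R < ((f + 1)%:~R : R).
  by apply: le_lt_trans vf; rewrite intrN -[_%:~R]/((K * H)%:R : R) natrM -mulNr ler_pM2r.
rewrite ler_int in f_le; rewrite ltr_int in f_gt.
have g_lt : (`|(f + (K * H)%:Z)%R| < 2 * K * H + 1)%N by lia.
exists (Ordinal g_lt); rewrite /grid_point /= gez0_abs; last by lia.
rewrite addrK ler_pdivrMr // fv /= -[X in _ + X]mul1r -mulrDl ler_pdivlMr //.
by rewrite -[1]/(1%:~R) -intrD ltW.
Qed.

Lemma mem_shifted_cell (K : nat) (dl w v yy : R) (k : int) : 0 < dl <= 1 ->
  `|yy| <= K%:R -> w <= v <= w + dl -> `|v + yy - k%:~R| < dl ->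
  exists t : 'I_(2 * K + 3),
    shifted_point K w t - 2 * dl <= yy <= shifted_point K w t + dl.
Proof.
move=> /andP[dl0 dl1]; rewrite ler_norml => /andP[Ky yK] /andP[wv vw].
rewrite ltr_norml => /andP[kv vk].
(* [k] is within [K + 2] of [w], so [k - floor w + K] takes one of [2K + 3]
   values, and [yy] is within [dl] of [k - v], hence of [k - w]. *)
set f := Num.floor w; have /andP[fw wf] := floor_itv w; rewrite -/f in fw wf.
have k_lt : (k%:~R : R) < (f + K%:Z + 3)%:~R.
  by move: wf; rewrite !intrD /= -!natz /=; lra.
have k_gt : ((f - K%:Z - 1)%:~R : R) < k%:~R.
  by move: fw; rewrite !intrD !intrN /= -!natz /=; lra.
rewrite ltr_int in k_lt; rewrite ltr_int in k_gt.
have t_lt : (`|(k - f + K%:Z)%R| < 2 * K + 3)%N by lia.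
exists (Ordinal t_lt); rewrite /shifted_point /= gez0_abs; last by lia.
have -> : f + (k - f + K%:Z) - K%:Z = k by ring.
by apply/andP; split; lra.
Qed.

Lemma row_grid_cell (n K H : nat) (v : 'rV[R]_n) : (0 < H)%N -> cube K v ->
  exists g : {ffun 'I_n -> 'I_(2 * K * H + 1)},
    box (\row_i grid_point K H (g i)) (\row_i (grid_point K H (g i) + H%:R^-1)) v.
Proof.
move=> H0 vK; have [g gv] := fin_all_exists (fun i => mem_grid_cell H0 (vK i)).
by exists [ffun i => g i] => i; rewrite !mxE ffunE.
Qed.

Lemma row_shifted_cell (n K : nat) (dl : R) (w v y : 'rV[R]_n) : 0 < dl <= 1 ->
  cube K y -> (forall i, w ord0 i <= v ord0 i <= w ord0 i + dl) -> distZ (v + y) < dl ->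
  exists t : {ffun 'I_n -> 'I_(2 * K + 3)},
    box (\row_i (shifted_point K (w ord0 i) (t i) - 2 * dl))
        (\row_i (shifted_point K (w ord0 i) (t i) + dl)) y.
Proof.
move=> dl01 yK wv /distZ_lt [k vyk].
have vyk' i : `|v ord0 i + y ord0 i - (k i)%:~R| < dl by have := vyk i; rewrite !mxE.
have [t ty] := fin_all_exists (fun i => mem_shifted_cell dl01 (yK i) (wv i) (vyk' i)).
by exists [ffun i => t i] => i; rewrite !mxE ffunE.
Qed.

Lemma box_vol_const_sides (n : nat) (a b : 'rV[R]_n) (c : R) : 0 <= c ->
  (forall i, b ord0 i - a ord0 i = c) -> box_vol a b = c ^+ n.
Proof.
move=> c0 ab; rewrite /box_vol (eq_bigr (fun=> c)) ?prodr_const ?card_ord // => i _.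
by rewrite ab max_r.
Qed.

Lemma box_vol_row_mx (n1 n2 : nat) (a1 b1 : 'rV[R]_n1) (a2 b2 : 'rV[R]_n2) :
  box_vol (row_mx a1 a2) (row_mx b1 b2) = box_vol a1 b1 * box_vol a2 b2.
Proof.
by rewrite /box_vol big_split_ord; congr (_ * _); apply: eq_bigr => i _;
  rewrite ?row_mxEl ?row_mxEr.
Qed.

Lemma box_row_mx (n1 n2 : nat) (a1 b1 : 'rV[R]_n1) (a2 b2 : 'rV[R]_n2)
    (z : 'rV[R]_(n1 + n2)) :
  box a1 b1 (lsubmx z) -> box a2 b2 (rsubmx z) -> box (row_mx a1 a2) (row_mx b1 b2) z.
Proof.
move=> z1 z2 i; case: (splitP i) => j ij.
  by rewrite (_ : i = lshift n2 j) ?row_mxEl; [have := z1 j; rewrite mxE|exact: val_inj].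
by rewrite (_ : i = rshift n1 j) ?row_mxEr; [have := z2 j; rewrite mxE|exact: val_inj].
Qed.

End GridCells.
Arguments grid_point {R}.

Section Covers.
Variables (R : realType) (d K : nat) (th : R) (j : nat).
Hypotheses (th01 : 0 < th <= 1) (j0 : (0 < j)%N).

Let dl := th / j%:R.
Let M := ((2 * j) ^ d)%N.
Let L := (2 * K + 3)%N.

Let dl01 : 0 < dl <= 1.
Proof.
have [th0 th1] := andP th01; rewrite divr_gt0 ?ltr0n //= ler_pdivrMr ?ltr0n // mul1r.
by rewrite (le_trans th1) // ler1n.
Qed.

Lemma Phi_cover (x : 'rV[R]_d) :
  exists (T : finType) (a b : T -> 'rV[R]_d),
    \sum_p box_vol (a p) (b p) = ((6 * (2 * K + 3))%:R * th) ^+ d /\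
    forall y, cube K y ->
      (exists k, (1 <= k <= (2 * j) ^ d)%N /\ distZ (k%:R *: x + y) < th / j%:R) ->
      exists p, box (a p) (b p) y.
Proof.
have [dl0 _] := andP dl01.
(* An index [p] encodes [k = p.1 + 1] and the cell of each coordinate. *)
pose T := ('I_M * {ffun 'I_d -> 'I_L})%type.
pose c (p : T) i := shifted_point K ((p.1.+1)%:R * x ord0 i) (p.2 i).
exists T, (fun p => \row_i (c p i - 2 * dl)), (fun p => \row_i (c p i + dl)); split.
  rewrite (eq_bigr (fun=> (3 * dl) ^+ d)) => [|p _]; last first.
    by apply: box_vol_const_sides => [|i]; rewrite ?mxE; [rewrite mulr_ge0 // ltW|ring].
  rewrite sumr_const card_prod card_ffun !card_ord -[_ *+ _]mulr_natl natrM !natrX -!exprMn.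
  congr (_ ^+ _).
  by rewrite /dl /L (natrM _ 2 j) (natrM _ 6); field; rewrite pnatr_eq0 -lt0n.
move=> y yK [k [/andP[k1 kM] close]].
have [|t yt] := row_shifted_cell (w := k%:R *: x) dl01 yK _ close.
  by move=> i; rewrite lexx lerDl ltW.
have kM' : (k.-1 < M)%N by rewrite prednK.
by exists (Ordinal kM', t) => i; rewrite !mxE /c /= prednK //; have := yt i; rewrite !mxE.
Qed.

Lemma Pi_cover :
  exists (T : finType) (a b : T -> 'rV[R]_(d + d)),
    \sum_p box_vol (a p) (b p) <= ((6 * (2 * K + 1) * (2 * K + 3))%:R * th) ^+ d /\
    forall z, cube K z ->
      (exists k, (1 <= k <= (2 * j) ^ d)%N /\
         distZ (k%:R *: lsubmx z + rsubmx z) < th / j%:R) ->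
      exists p, box (a p) (b p) z.
Proof.
have [dl0 _] := andP dl01.
(* On a grid of mesh [1 / H], [k x] moves by at most [k / H <= dl] in a cell. *)
have [H H0 MH] : exists2 H : nat, (0 < H)%N & M%:R <= dl * H%:R.
  exists (Num.bound (dl^-1 * M%:R)).+1 => //; rewrite -ler_pdivrMl //.
  by rewrite (le_trans (ltW (archi_boundP _))) ?ler_nat // mulr_ge0 // invr_ge0 ltW.
have H0' : (0 : R) < H%:R by rewrite ltr0n.
pose G := (2 * K * H + 1)%N.
pose T := ('I_M * {ffun 'I_d -> 'I_G} * {ffun 'I_d -> 'I_L})%type.
pose s (p : T) i : R := grid_point K H (p.1.2 i).
pose c (p : T) i := shifted_point K ((p.1.1.+1)%:R * s p i) (p.2 i).
exists T, (fun p => row_mx (\row_i s p i) (\row_i (c p i - 2 * dl))),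
  (fun p => row_mx (\row_i (s p i + H%:R^-1)) (\row_i (c p i + dl))); split.
  rewrite (eq_bigr (fun=> (H%:R^-1 * (3 * dl)) ^+ d)) => [|p _]; last first.
    rewrite box_vol_row_mx exprMn; congr (_ * _); apply: box_vol_const_sides;
      by [rewrite invr_ge0 ltW|rewrite mulr_ge0 // ltW|move=> i; rewrite !mxE; ring].
  rewrite sumr_const !card_prod !card_ffun !card_ord -[_ *+ _]mulr_natl.
  have [th0 _] := andP th01.
  rewrite !natrM !natrX -!exprMn; apply: lerXn2r.
  - by rewrite -topredE /= !mulr_ge0 ?invr_ge0 ?ler0n ?(ltW th0).
  - by rewrite -topredE /= !mulr_ge0 ?ler0n ?(ltW th0).
  have -> : (2 * j)%:R * G%:R * L%:R * (H%:R^-1 * (3 * dl)) = 6 * L%:R * th * (G%:R / H%:R).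
    by rewrite /dl (natrM _ 2 j); field; rewrite !pnatr_eq0 -!lt0n H0 j0.
  have -> : 6 * (2 * K + 1)%:R * (2 * K + 3)%:R * th = 6 * L%:R * th * (2 * K + 1)%:R.
    by rewrite /L; ring.
  rewrite ler_wpM2l ?mulr_ge0 ?ler0n ?(ltW th0) // ler_pdivrMr //.
  by rewrite -natrM ler_nat /G mulnDl mul1n leq_add2l.
move=> z zK [k [/andP[k1 kM] close]].
have zK1 : cube K (lsubmx z) by move=> i; rewrite mxE; exact: zK.
have zK2 : cube K (rsubmx z) by move=> i; rewrite mxE; exact: zK.
have [g xg] := row_grid_cell H0 zK1.
have [|t yt] := row_shifted_cell (w := \row_i (k%:R * grid_point K H (g i))) dl01 zK2 _ close.
  move=> i; have := xg i; rewrite !mxE => /andP[sx xs].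
  rewrite ler_wpM2l //= (le_trans (ler_wpM2l (ler0n _ k) xs)) // mulrDr lerD2l.
  by rewrite ler_pdivrMr // (le_trans _ MH) // ler_nat.
have kM' : (k.-1 < M)%N by rewrite prednK.
exists ((Ordinal kM', g), t); apply: box_row_mx => i; rewrite !mxE /c /s /=.
  by have := xg i; rewrite !mxE.
by rewrite prednK //; have := yt i; rewrite !mxE.
Qed.

End Covers.

Section NullSets.
Variables (R : realType) (d' : nat).
Local Notation d := d'.+1.

Lemma cover_bound_pow (c th : R) : 0 <= c -> 0 < th <= 1 -> (c * th) ^+ d <= c ^+ d * th.
Proof.
by move=> c0 /andP[th0 th1]; rewrite exprMn ler_wpM2l ?exprn_ge0 // ler_iXnr // ltW.
Qed.

Lemma Phi_null (x : 'rV[R]_d) : lebesgue_outer (Phi x) = 0%E.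
Proof.
apply: lebesgue_outer_null_cubes => K.
apply: (@lebesgue_outer_eventually_covered_null _ _ _
  (fun th j y => cube K y /\ exists k, (1 <= k <= (2 * j) ^ d)%N /\
     distZ (k%:R *: x + y) < th / j%:R) ((6 * (2 * K + 3))%:R ^+ d)).
- exact: exprn_ge0.
- move=> th /andP[th0 _] y [Py yK].
  have [J close] := Pi_eventually_close (ltn0Sn d') th0 Py.
  by exists J => j Jj; split => //; exact: close.
- move=> th j th01 j0; have [T [a [b [vol cov]]]] := Phi_cover K th01 j0 x.
  exists T, a, b; split; first by rewrite vol; exact: cover_bound_pow (ler0n _ _) th01.
  by move=> y [yK /cov]; apply.
Qed.

Lemma Pi_null : lebesgue_outer (pair_set (@Pi R d)) = 0%E.
Proof.
apply: lebesgue_outer_null_cubes => K.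
apply: (@lebesgue_outer_eventually_covered_null _ _ _
  (fun th j (z : 'rV[R]_(d + d)) => cube K z /\
     exists k, (1 <= k <= (2 * j) ^ d)%N /\ distZ (k%:R *: lsubmx z + rsubmx z) < th / j%:R)
  ((6 * (2 * K + 1) * (2 * K + 3))%:R ^+ d)).
- exact: exprn_ge0.
- move=> th /andP[th0 _] z [Pz zK].
  have [J close] := Pi_eventually_close (ltn0Sn d') th0 Pz.
  by exists J => j Jj; split => //; exact: close.
- move=> th j th01 j0; have [T [a [b [vol cov]]]] := @Pi_cover R d K th j th01 j0.
  exists T, a, b; split; first exact: le_trans vol (cover_bound_pow (ler0n _ _) th01).
  by move=> z [zK /cov]; apply.
Qed.

End NullSets.

Theorem theorem2 (R : realType) (d : nat) (hd : (0 < d)%N) :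
  lebesgue_measurable (pair_set (@Pi R d)) /\
  lebesgue_outer (pair_set (@Pi R d)) = 0%E /\
  (forall x : 'rV[R]_d, lebesgue_outer (@Phi R d x) = 0%E).
Proof.
case: d hd => // d' _.
split; last by split; [exact: Pi_null|exact: Phi_null].
exact: caratheodory_null (Pi_null R d').
Qed.
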